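(* Assume all jobs are infinitesimal. Let $\mathcal B_{IPR}=\{B_1,\dots,B_m\}$ be the partition returned by IPR with $\rho=2$. Then $b_{\max}\le\frac{W}{\ell}$, where, for the final tentative assignment, $b_{\max}=\max_{B\in\mathcal B_{IPR},|B|\ge2}p(B)$, $\mathcal M_{\max}$ is the collection containing a bag of processing time $b_{\max}$, $W=\sum_{B\in\mathcal M_{\max}}p(B)$ and $\ell=|\mathcal M_{\max}|$.
   Context: Jobs have processing times; for a bag $B$, $p(B)$ is its total processing time. Infinitesimal jobs: all jobs have the same extremely small processing time, so that the total load can be divided into bags of arbitrary total processing times; in particular the LPT redistribution below splits a pooled load perfectly evenly among the new bags. There are $m$ machines with predicted speeds $\hat s_1\ge\dots\ge\hat s_m$; $opt(\mathbf p,\hat{\mathbf s})$ is the minimum makespan $\max_i(\text{load of } i)/\hat s_i$ of assigning jobs to machines with speeds $\hat{\mathbf s}$. Algorithm IPR. Input: $\hat{\mathbf s}$, the jobs, $\alpha\in(0,1)$, accuracy $\epsilon\in(0,1)$, $\rho\ge1$. (1) Compute a partition $B_1,\dots,B_m$ with $p(B_1)\ge\dots\ge p(B_m)$ such that putting $B_i$ on machine $i$ has makespan at most $(1+\epsilon)opt(\mathbf p,\hat{\mathbf s})$ under speeds $\hat{\mathbf s}$. (2) Set $\overline{OPT}_C=\max_i p(B_i)/\hat s_i$ and tentative assignment $\mathcal M_i=\{B_i\}$. (3) While $\max\{p(B): B\in\cup_i\mathcal M_i, |B|\ge2\}>\rho\min\{p(B):B\in\cup_i\mathcal M_i\}$: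 compute $\mathcal M'=$ LPT-Rebalance$(\mathcal M)$; if $\max_i\sum_{B\in\mathcal M'_i}p(B)/\hat s_i>(1+\alpha)\overline{OPT}_C$ return the current bags $\cup_i\mathcal M_i$; else $\mathcal M\leftarrow\mathcal M'$. (4) Return the bags $\cup_i\mathcal M_i$. LPT-Rebalance: let $B_{\min}$ be a bag of minimum $p(B)$ over all bags, $\mathcal M_{\min}$ its collection, $\mathcal M_{\max}$ a collection containing a bag of maximum $p(B)$ among bags with at least two jobs. Move $B_{\min}$ into $\mathcal M_{\max}$, let $\ell=|\mathcal M_{\max}|$, pool its jobs and redistribute them into $\ell$ new bags by LPT (jobs in non-increasing processing time, each into a currently least-loaded bag); these form the new $\mathcal M_{\max}$. *)

From HB Require Import structures.
From mathcomp Require Import all_boot all_order all_algebra.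
Set Implicit Arguments. Unset Strict Implicit. Unset Printing Implicit Defensive.
Import Order.TTheory GRing.Theory Num.Theory.
Local Open Scope ring_scope.

Section IPR.
Variable R : realFieldType.

(* A bag is represented by its total processing time p(B) (jobs are
   infinitesimal).  A tentative assignment is a list of m collections
   (collection i sits on machine i), each a list of bags. *)
Definition state := seq (seq R).

(* A bag "has at least two jobs" iff its processing time is positive
   (infinitesimal jobs). *)
Definition multi (b : R) : Prop := 0 < b.

Definition makespan (m : nat) (s : 'I_m -> R) (M : state) : R :=
  \big[Num.max/0]_(i < m) ((\sum_(b <- nth [::] M i) b) / s i).

Definition makespan_vec (m : nat) (s : 'I_m -> R) (x : 'I_m -> R) : R :=
  \big[Num.max/0]_(i < m) (x i / s i).

(* Step (1): B_1 >= ... >= B_m, loads nonnegative, and makespan at most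
   (1+eps) opt, where opt is the optimum over all assignments of the total
   (infinitesimally divisible) load to the machines. *)
Definition step1_partition (m : nat) (s : 'I_m -> R) (eps : R) (B : 'I_m -> R) :
  Prop :=
  [/\ (forall i, 0 <= B i),
      (forall i j : 'I_m, (i <= j)%N -> B j <= B i) &
      (forall y : 'I_m -> R, (forall i, 0 <= y i) ->
         \sum_(i < m) y i = \sum_(i < m) B i ->
         makespan_vec s B <= (1 + eps) * makespan_vec s y)].

Definition init_state (m : nat) (B : 'I_m -> R) : state :=
  [seq [:: B i] | i : 'I_m].

Definition loop_cond (rho : R) (M : state) : Prop :=
  exists b c, [/\ b \in flatten M, multi b, c \in flatten M & rho * c < b].

(* LPT redistribution of a pooled collection of infinitesimal jobs into
   as many bags as the collection has: perfectly even split. *)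
Definition pool (C : seq R) : seq R :=
  nseq (size C) ((\sum_(x <- C) x) / (size C)%:R).

(* LPT-Rebalance (as a relation: ties among minimum / maximum bags may be
   broken arbitrarily). *)
Definition lpt_rebalance (M M' : state) : Prop :=
  exists (i j : nat) (c : R),
    [/\ (i < size M)%N /\ (j < size M)%N,
        c \in nth [::] M i,
        (forall c', c' \in flatten M -> c <= c'),
        (exists b, [/\ b \in nth [::] M j, multi b &
                      forall b', b' \in flatten M -> multi b' -> b' <= b]) &
        M' = let M1 := set_nth [::] M i (rem c (nth [::] M i)) in
             set_nth [::] M1 j (pool (c :: nth [::] M1 j))].

(* Mfin is the final tentative assignment of some run of IPR (steps 2-4)
   started from partition B. *)
Definition ipr_final (m : nat) (s : 'I_m -> R) (alpha rho : R)
    (B : 'I_m -> R) (Mfin : state) : Prop :=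
  let OPTC := makespan s (init_state B) in
  exists (T : nat) (st : nat -> state),
    [/\ st 0%N = init_state B,
        (forall t, (t < T)%N ->
           [/\ loop_cond rho (st t), lpt_rebalance (st t) (st t.+1) &
               makespan s (st t.+1) <= (1 + alpha) * OPTC]),
        st T = Mfin &
        (~ loop_cond rho Mfin \/
         exists M', lpt_rebalance Mfin M' /\ (1 + alpha) * OPTC < makespan s M')].

End IPR.

From HB Require Import structures.
From mathcomp Require Import all_boot all_order all_algebra.
Set Implicit Arguments. Unset Strict Implicit. Unset Printing Implicit Defensive.
Import Order.TTheory GRing.Theory Num.Theory.
Local Open Scope ring_scope.

(* An LPT redistribution of infinitesimal jobs splits the pooled
   load into equal bags, and removing one bag from a collection of equal bags
   leaves equal bags.  Since IPR starts from singleton collections, every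
   collection of every tentative assignment consists of equal bags, so a bag
   of processing time b_max in M_max is exactly the mean W / l. *)

Lemma constant_memP (T : eqType) (s : seq T) :
  reflect {in s &, forall x y, x = y} (constant s).
Proof.
case: s => [|x s] /=; first by left.
apply: (iffP allP) => [eq_x y z | eq_s y s_y].
  have eq_xy (u : T) : u \in x :: s -> u = x.
    by rewrite inE => /predU1P[// | /eq_x /eqP].
  by move=> /eq_xy -> /eq_xy ->.
by apply/eqP/eq_s; rewrite inE ?eqxx ?s_y ?orbT.
Qed.

Lemma constant_rem (T : eqType) (x : T) (s : seq T) :
  constant s -> constant (rem x s).
Proof.
move/constant_memP=> eq_s; apply/constant_memP=> y z /mem_rem s_y /mem_rem s_z.
exact: eq_s.
Qed.

Lemma mean_constant (F : numFieldType) (s : seq F) (x : F) :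
  constant s -> x \in s -> (\sum_(y <- s) y) / (size s)%:R = x.
Proof.
move=> /constant_memP eq_s s_x.
have -> : \sum_(y <- s) y = \sum_(y <- s) x.
  by apply: eq_big_seq => y s_y; rewrite (eq_s y x).
have size_gt0 : (0 < size s)%N by rewrite lt0n size_eq0; apply: contraTneq s_x => ->.
by rewrite big_const_seq count_predT iter_addr_0 -(mulr_natr x) mulfK ?pnatr_eq0 -?lt0n.
Qed.

Definition equal_bags (T : eqType) (M : seq (seq T)) : Prop :=
  forall k, constant (nth [::] M k).

Lemma equal_bags_singletons (I T : eqType) (f : I -> T) (r : seq I) :
  equal_bags [seq [:: f i] | i <- r].
Proof. by move=> k; elim: r k => [|i r IHr] [|k] //=; apply: IHr. Qed.

Lemma equal_bags_set_nth (T : eqType) (M : seq (seq T)) (i : nat) (s : seq T) :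
  equal_bags M -> constant s -> equal_bags (set_nth [::] M i s).
Proof. by move=> eq_M const_s k; rewrite nth_set_nth /=; case: eqP. Qed.

Lemma equal_bags_lpt_rebalance (R : realFieldType) (M M' : state R) :
  equal_bags M -> lpt_rebalance M M' -> equal_bags M'.
Proof.
move=> eq_M [i [j [c [_ _ _ _ ->]]]].
apply: equal_bags_set_nth; last exact: constant_nseq.
exact/equal_bags_set_nth/constant_rem.
Qed.

Lemma equal_bags_ipr_final (R : realFieldType) (m : nat) (s : 'I_m -> R)
    (alpha rho : R) (B : 'I_m -> R) (Mfin : state R) :
  ipr_final s alpha rho B Mfin -> equal_bags Mfin.
Proof.
move=> [T [st [st0 st_step <- _]]].
have equal_st t : (t <= T)%N -> equal_bags (st t).
  elim: t => [|t IHt] le_tT; first by rewrite st0; apply: equal_bags_singletons.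
  have [_ rebalance _] := st_step t le_tT.
  exact: equal_bags_lpt_rebalance (IHt (ltnW le_tT)) rebalance.
exact: equal_st.
Qed.

Theorem lemma12 (R : realFieldType) (m : nat) (s : 'I_m -> R) (alpha eps : R)
    (B : 'I_m -> R) (Mfin : state R) :
  (0 < m)%N ->
  (forall i, 0 < s i) ->
  (forall i j : 'I_m, (i <= j)%N -> s j <= s i) ->
  0 < alpha < 1 -> 0 < eps < 1 ->
  step1_partition s eps B ->
  ipr_final s alpha 2 B Mfin ->
  forall (j : nat) (bmax : R),
    bmax \in nth [::] Mfin j -> multi bmax ->
    (forall b, b \in flatten Mfin -> multi b -> b <= bmax) ->
    bmax <= (\sum_(b <- nth [::] Mfin j) b) / (size (nth [::] Mfin j))%:R.
Proof.
move=> _ _ _ _ _ _ final j bmax Mj_bmax _ _.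
by rewrite (mean_constant (equal_bags_ipr_final final j) Mj_bmax).
Qed.
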